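(* Let $X$ be a hyperbolic metric on $S$ and let $\alpha,\beta,\gamma\in\hat{\pi}$ be such that the $X$-geodesics $\alpha(X)$ and $\beta(X)$ intersect transversally. Let $P$ be an $(\alpha(X),\beta(X))$-intersection point. Then the equality $\widetilde{(\alpha^m*_P\beta)}_0=\widetilde{\gamma}$ holds for at most two positive integers $m$, and likewise the equality $\widetilde{(\alpha^m*_P\beta)}_\infty=\widetilde{\gamma}$ holds for at most two positive integers $m$.
   Context: $S$ is an oriented surface (possibly with boundary and punctures) of negative Euler characteristic; $\hat{\pi}$ is the set of free homotopy classes of directed closed curves on $S$. For a hyperbolic metric $X$ on $S$ (a point of Teichmüller space) and $\alpha\in\hat{\pi}$, $\alpha(X)$ denotes the geodesic representative of $\alpha$. If $a,b$ are closed curves intersecting transversally, an $(a,b)$-intersection point is a point $P\in a\cap b$ together with a choice of a pair of small arcs, one of $a$ and one of $b$, intersecting only at $P$. For $\alpha^m$ ($m\ge1$) the geodesic $\alpha^m(X)$ is $\alpha(X)$ traversed $m$ times, so $P$ is also regarded as an $(\alpha^m(X),\beta(X))$-intersection point. For directed curves $\alpha,\beta$ meeting transversally at $P$, with $\varepsilon_P(\alpha,\beta)=\pm1$ the sign of the intersection at $P$ and $\alpha_P,\beta_P$ the loops based at $P$, define $(\alpha*_P\beta)_0=|\alpha_P\beta_P^{\varepsilon_P(\alpha,\beta)}|$ and $(\alpha*_P\beta)_\infty=|\alpha_P\beta_P^{-\varepsilon_P(\alpha,\beta)}|$, where $|\cdot|$ denotes free homotopy class. For $x\in\hat{\pi}$,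 $\widetilde{x}$ denotes its free homotopy class with orientation forgotten (so $\widetilde{x}=\widetilde{y}$ iff $y=x$ or $y=x^{-1}$). *)

From HB Require Import structures.
From Stdlib Require Import Rdefinitions.
From mathcomp Require Import all_boot all_order all_algebra.
From mathcomp Require Import Rstruct.
Set Implicit Arguments. Unset Strict Implicit. Unset Printing Implicit Defensive.
Import Order.TTheory GRing.Theory Num.Theory.
Local Open Scope ring_scope.

Notation M2 := 'M[R]_2.

Definition ma (A : M2) : R := A ord0 ord0.
Definition mb (A : M2) : R := A ord0 ord_max.
Definition mc (A : M2) : R := A ord_max ord0.
Definition md (A : M2) : R := A ord_max ord_max.

(* A discrete, torsion-free (in PSL(2,R)), finitely generated subgroup of
   SL(2,R); its image in PSL(2,R) is the holonomy group of the hyperbolic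
   surface (S, X), i.e. the deck group of the universal cover, ~ pi_1(S). *)
Record fuchsian_group (G : M2 -> Prop) : Prop := {
  fg_det : forall g, G g -> \det g = 1;
  fg_one : G 1;
  fg_mul : forall g h, G g -> G h -> G (g * h);
  fg_inv : forall g, G g -> G g^-1;
  fg_discrete : exists eps : R, 0 < eps /\
    forall g, G g -> (forall i j, `|g i j - (1 : M2) i j| < eps) -> g = 1;
  fg_torsion_free : forall g (n : nat), G g -> (0 < n)%N ->
    (g ^+ n = 1 \/ g ^+ n = -1) -> g = 1 \/ g = -1;
  fg_fin_gen : exists s : seq M2, (forall x, x \in s -> G x) /\
    forall g, G g -> exists w : seq M2,
      (forall x, x \in w -> x \in s \/ x^-1 \in s) /\ g = \prod_(x <- w) x
}.

(* Points of the upper half-plane are pairs (x, y) with y > 0. *)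
(* Moebius action z |-> (a z + b) / (c z + d) for det = 1. *)
Definition mob (A : M2) (z : R * R) : R * R :=
  let: (x, y) := z in
  let D := (mc A * x + md A) ^+ 2 + (mc A * y) ^+ 2 in
  (((ma A * x + mb A) * (mc A * x + md A) + ma A * mc A * y ^+ 2) / D, y / D).

Definition cosh_dist (z w : R * R) : R :=
  1 + ((z.1 - w.1) ^+ 2 + (z.2 - w.2) ^+ 2) / (2 * z.2 * w.2).

Definition hyperbolic (A : M2) : Prop := 2 < `|\tr A|.

(* axis of a hyperbolic A: points displaced by exactly the translation
   length l, where cosh l = tr(A)^2/2 - 1 *)
Definition axis (A : M2) (z : R * R) : Prop :=
  0 < z.2 /\ cosh_dist z (mob A z) = (\tr A) ^+ 2 / 2 - 1.

(* the two axes (geodesics in H^2) meet transversally: they share a point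
   and are distinct geodesics *)
Definition axes_cross (A B : M2) : Prop :=
  (exists z, axis A z /\ axis B z) /\ (exists z, axis A z /\ ~ axis B z).

(* conjugacy in the image of G in PSL(2,R) = free homotopy of directed curves *)
Definition conj_pm (G : M2 -> Prop) (x y : M2) : Prop :=
  exists g, G g /\ (g * x * g^-1 = y \/ g * x * g^-1 = - y).

(* equality of unoriented free homotopy classes: x~ = c~ *)
Definition unor_conj (G : M2 -> Prop) (x c : M2) : Prop :=
  conj_pm G x c \/ conj_pm G x c^-1.

Definition at_most_two_pos (P : nat -> Prop) : Prop :=
  forall m1 m2 m3 : nat, (0 < m1)%N -> (m1 < m2)%N -> (m2 < m3)%N ->
    ~ (P m1 /\ P m2 /\ P m3).

(* Put T := tr a and u m := tr (a^m b).  By Cayley-Hamilton u (m+2) = T u (m+1) - u m, so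
   the quadratic form u m ^ 2 + u (m+1) ^ 2 - T u m u (m+1) does not depend on m.  At m = 0
   it equals tr [a, b] + 2 - T ^ 2 by Fricke's identity, and it is negative: a common point
   of the axes of a and b forces tr [a, b] <= 2, while |T| > 2.  A negative invariant makes
   T u m u (m+1) positive, whence |u (m+2)| = |T| |u (m+1)| - |u m|; so m |-> |u m| is
   strictly convex and takes no value three times.  Conjugation, sign and inversion do not
   change |tr|, so at most two m can give the class of c. *)

From Stdlib Require Import Rdefinitions.
From mathcomp Require Import all_boot all_order all_algebra.
From mathcomp Require Import Rstruct ring lra.
Import Order.TTheory GRing.Theory Num.Theory.
Set Implicit Arguments.
Unset Strict Implicit.
Unset Printing Implicit Defensive.
Local Open Scope ring_scope.

Section ConvexSequences.
Variable F : realFieldType.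
Implicit Types p : nat -> F.

Lemma ltr_incr_nat p m n : (m < n)%N ->
  (forall i, (m <= i < n)%N -> p i < p i.+1) -> p m < p n.
Proof.
move=> lt_mn incr; rewrite -subr_gt0 -(telescope_sumr _ (ltnW lt_mn)).
have := @ltr_sum_nat F m n (fun=> 0) (fun i => p i.+1 - p i) lt_mn.
by rewrite big1 // => -> // i /incr; rewrite subr_gt0.
Qed.

Lemma strictly_convex_three_eq p :
  (forall i, p i.+1 - p i < p i.+2 - p i.+1) -> forall m1 m2 m3, (m1 < m2 < m3)%N ->
  p m1 = p m2 -> p m2 = p m3 -> False.
Proof.
set d := fun i => p i.+1 - p i => convex m1 m2 m3 /andP[lt12 lt23] e12 e23.
have d_incr : {homo d : i j / (i < j)%N >-> i < j}.
  by apply: homo_ltn => // y x z; apply: lt_trans.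
have d_le i j : (i <= j)%N -> d i <= d j.
  by rewrite leq_eqVlt => /predU1P[->|/d_incr/ltW].
case: m2 => [|j] in lt12 lt23 e12 e23 *; first by [].
have [dj_lt0 | dj_ge0] := ltP (d j) 0.
- have : - p m1 < - p j.+1.
    apply: (@ltr_incr_nat (fun i => - p i)) => // i /andP[_ le_ij]; rewrite ltrN2 -subr_lt0.
    exact: le_lt_trans (d_le i j le_ij) dj_lt0.
  by rewrite e12 ltxx.
- have : p j.+1 < p m3.
    apply: ltr_incr_nat => // i /andP[lt_ji _]; rewrite -subr_gt0.
    exact: le_lt_trans dj_ge0 (d_incr _ _ lt_ji).
  by rewrite e23 ltxx.
Qed.
End ConvexSequences.

Section ChebyshevRecurrence.
Variables (F : realFieldType) (T : F) (u : nat -> F).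
Hypothesis T_gt2 : 2 < `|T|.
Hypothesis u_rec : forall m, u m.+2 = T * u m.+1 - u m.

Definition rec_form m := u m ^+ 2 + u m.+1 ^+ 2 - T * u m * u m.+1.

Lemma rec_form_const m : rec_form m = rec_form 0.
Proof. by elim: m => [|m <-] //; rewrite /rec_form u_rec; ring. Qed.

Hypothesis rec_form_lt0 : rec_form 0 < 0.

Lemma rec_mul_gt0 m : 0 < T * u m * u m.+1.
Proof.
have := rec_form_const m; have := rec_form_lt0; rewrite /rec_form.
have := sqr_ge0 (u m); have := sqr_ge0 (u m.+1); lra.
Qed.

Lemma norm_rec m : `|u m.+2| = `|T| * `|u m.+1| - `|u m|.
Proof.
have next_gt0 : 0 < T * u m.+1 * u m.+2 by exact: rec_mul_gt0.
have prev_gt0 : 0 < T * u m.+1 * u m by rewrite mulrAC; exact: rec_mul_gt0.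
rewrite -normrM.
have [v_gt0|v_lt0|v0] := ltgtP 0 (T * u m.+1).
- move: next_gt0 prev_gt0; rewrite !(pmulr_rgt0 _ v_gt0) => next_gt0 prev_gt0.
  by rewrite !gtr0_norm // u_rec; ring.
- move: next_gt0 prev_gt0; rewrite !(nmulr_rgt0 _ v_lt0) => next_gt0 prev_gt0.
  by rewrite !ltr0_norm // u_rec; ring.
- by move: next_gt0; rewrite -v0 mul0r ltxx.
Qed.

Lemma norm_rec_convex i :
  `|u i.+1| - `|u i| < `|u i.+2| - `|u i.+1|.
Proof.
have u_neq0 : 0 < `|u i.+1|.
  rewrite normr_gt0; apply: contraTneq (rec_mul_gt0 i) => ->.
  by rewrite mulr0 ltxx.
have : 2 * `|u i.+1| < `|T| * `|u i.+1| by rewrite (ltr_pM2r u_neq0).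
rewrite norm_rec; lra.
Qed.

Lemma norm_rec_three_eq m1 m2 m3 : (m1 < m2 < m3)%N ->
  `|u m1| = `|u m2| -> `|u m2| = `|u m3| -> False.
Proof. exact: (@strictly_convex_three_eq _ (fun m => `|u m|) norm_rec_convex). Qed.

End ChebyshevRecurrence.

Section TwoByTwo.
Variable K : comUnitRingType.
Implicit Types A B g x : 'M[K]_2.

Lemma mx2_Cayley_Hamilton A : A ^+ 2 = \tr A *: A - \det A *: 1.
Proof.
have CH := Cayley_Hamilton A.
have lead1 : (char_poly A)`_2 = 1.
  by have /monicP := char_poly_monic A; rewrite lead_coefE size_char_poly.
rewrite -[char_poly A]coefK size_char_poly poly_def rmorph_sum in CH.
rewrite !big_ord_recr big_ord0 /= add0r !linearZ /= !rmorphXn /= in CH.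
rewrite horner_mx_X expr0 expr1 lead1 (char_poly_trace A) // in CH.
rewrite char_poly_det sqrrN expr1n mul1r scale1r scaleNr in CH.
by move/eqP: CH; rewrite addrC addr_eq0 opprB => /eqP.
Qed.

Lemma mx2_inv_det1 A : \det A = 1 -> A^-1 = \tr A *: 1 - A.
Proof.
move=> detA; have uA : A \is a GRing.unit by rewrite unitmxE detA unitr1.
apply: (mulIr uA); rewrite mulVr // mulrBl -scalerAl mul1r -expr2.
by rewrite mx2_Cayley_Hamilton detA scale1r opprB addrC subrK.
Qed.

Lemma mxtrace_inv_det1 A : \det A = 1 -> \tr A^-1 = \tr A.
Proof. by move=> detA; rewrite mx2_inv_det1 // raddfB /= mxtraceZ mxtrace1; ring. Qed.

Lemma mxtrace_pow_mul_rec A B m : \det A = 1 ->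
  \tr (A ^+ m.+2 * B) = \tr A * \tr (A ^+ m.+1 * B) - \tr (A ^+ m * B).
Proof.
move=> detA; rewrite -[m.+2]/(2 + m)%N exprD -mulrA mx2_Cayley_Hamilton detA.
by rewrite scale1r mulrBl mul1r -scalerAl mulrA -exprS raddfB /= mxtraceZ.
Qed.

End TwoByTwo.

Lemma mxtrace_conj (K : comUnitRingType) n (g x : 'M[K]_n.+1) :
  g \is a GRing.unit -> \tr (g * x * g^-1) = \tr x.
Proof. by move=> ug; rewrite -!mulmxE mxtrace_mulC !mulmxE mulrA mulVr // mul1r. Qed.

Lemma sum_ord2 (V : nmodType) (F : 'I_2 -> V) : \sum_(k < 2) F k = F ord0 + F ord_max.
Proof. by rewrite big_ord_recr big_ord1; congr (F _ + F _); apply: val_inj. Qed.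

Lemma mxtrace2 (A : M2) : \tr A = ma A + md A.
Proof. by rewrite /mxtrace sum_ord2. Qed.

Lemma mxtrace_mul2 (A B : M2) :
  \tr (A * B) = ma A * ma B + mb A * mc B + mc A * mb B + md A * md B.
Proof. by rewrite /mxtrace sum_ord2 !mxE !sum_ord2 addrA. Qed.

Lemma det_mx2 (A : M2) : \det A = ma A * md A - mb A * mc A.
Proof.
rewrite (expand_det_row A ord0) sum_ord2 /cofactor !det_mx11 !mxE /=.
have -> : lift ord0 ord0 = ord_max :> 'I_2 by apply: val_inj.
have -> : lift ord_max ord0 = ord0 :> 'I_2 by apply: val_inj.
by rewrite expr0 expr1 mul1r mulN1r mulrN.
Qed.

(* [cosh_dist] is written with Stdlib's real operations; restate it in ring notation. *)
Lemma cosh_distE (z w : R * R) :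
  cosh_dist z w = 1 + ((z.1 - w.1) ^+ 2 + (z.2 - w.2) ^+ 2) / (2 * z.2 * w.2).
Proof. by []. Qed.

(* The boundary fixed points of [A] are the roots of [c t^2 + (d - a) t - b]; the zero set of
   [fix_circle A] is the half-circle (or vertical line) through them, i.e. the axis of [A]. *)
Definition fix_circle (A : M2) (z : R * R) :=
  mc A * (z.1 ^+ 2 + z.2 ^+ 2) + (md A - ma A) * z.1 - mb A.

Lemma cosh_dist_mob (A : M2) (z : R * R) : \det A = 1 -> 0 < z.2 ->
  cosh_dist z (mob A z) = (\tr A) ^+ 2 / 2 - 1 + fix_circle A z ^+ 2 / (2 * z.2 ^+ 2).
Proof.
case: z => x y /=; rewrite cosh_distE det_mx2 mxtrace2 /mob /fix_circle /=.
move: (ma A) (mb A) (mc A) (md A) => p q r s detA y_gt0.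
set D := (r * x + s) ^+ 2 + (r * y) ^+ 2.
set N := (p * x + q) * (r * x + s) + p * r * y ^+ 2.
have y_neq0 : y != 0 by rewrite gt_eqF.
have D_neq0 : D != 0.
  rewrite paddr_eq0 ?sqr_ge0 // !sqrf_eq0 mulf_eq0 (negbTE y_neq0) orbF.
  apply/negP => /andP[/eqP rx_s0 /eqP r0]; move: rx_s0 detA.
  by rewrite r0 mul0r add0r => ->; rewrite !mulr0 subr0 => /esym/eqP; rewrite oner_eq0.
have -> : 1 + ((x - N / D) ^+ 2 + (y - y / D) ^+ 2) / (2 * y * (y / D))
    = 1 + ((x * D - N) ^+ 2 + y ^+ 2 * (D - 1) ^+ 2) / (2 * y ^+ 2 * D).
  by field; rewrite D_neq0 y_neq0.
have E : (x * D - N) ^+ 2 + y ^+ 2 * (D - (p * s - q * r)) ^+ 2 =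
    D * ((r * (x ^+ 2 + y ^+ 2) + (s - p) * x - q) ^+ 2
         + y ^+ 2 * ((p + s) ^+ 2 - 4 * (p * s - q * r))).
  rewrite /D /N; ring.
rewrite detA mulr1 in E; rewrite E.
by field; rewrite D_neq0 y_neq0.
Qed.

Lemma axis_fix_circle (A : M2) (z : R * R) : \det A = 1 -> axis A z -> fix_circle A z = 0.
Proof.
move=> detA [y_gt0]; rewrite cosh_dist_mob // => /eqP; rewrite addrC -subr_eq0 addrK.
rewrite mulf_eq0 invr_eq0 sqrf_eq0 => /orP[/eqP // | /eqP d0].
have : 0 < 2 * z.2 ^+ 2 by rewrite mulr_gt0 ?exprn_gt0.
by rewrite d0 ltxx.
Qed.

Lemma fix_circleV (A : M2) (z : R * R) : \det A = 1 -> fix_circle A^-1 z = - fix_circle A z.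
Proof.
by move=> detA; rewrite /fix_circle mx2_inv_det1 // mxtrace2 /ma /mb /mc /md !mxE /=; ring.
Qed.

Lemma trace_form_le (a b : M2) (z : R * R) : \det a = 1 -> \det b = 1 ->
  fix_circle a z = 0 -> fix_circle b z = 0 ->
  (\tr b) ^+ 2 + (\tr (a * b)) ^+ 2 - \tr a * \tr b * \tr (a * b) <= 4 - (\tr a) ^+ 2.
Proof.
case: z => x y; rewrite /fix_circle !det_mx2 mxtrace_mul2 !mxtrace2 /=.
move: (ma a) (mb a) (mc a) (md a) (ma b) (mb b) (mc b) (md b).
move=> a1 a2 a3 a4 b1 b2 b3 b4 det_a det_b fix_a fix_b.
set t := a1 * b1 + a2 * b3 + a3 * b2 + a4 * b4.
(* With Fricke's identity, [fricke] below says tr [a, b] = 2 - L ^ 2. *)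
pose L := (a1 - a4 - 2 * a3 * x) * (b3 * y) - (a3 * y) * (b1 - b4 - 2 * b3 * x).
have fricke : 4 * ((b1 + b4) ^+ 2 + t ^+ 2 - (a1 + a4) * (b1 + b4) * t)
    = 4 * (b1 + b4) ^+ 2 - (a1 + a4) ^+ 2 * (b1 + b4) ^+ 2
      + ((a1 + a4) ^+ 2 - 4 * (a1 * a4 - a2 * a3)) * ((b1 + b4) ^+ 2 - 4 * (b1 * b4 - b2 * b3))
      - 4 * L ^+ 2.
  rewrite /t /L.
  have -> : a2 = a3 * (x ^+ 2 + y ^+ 2) + (a4 - a1) * x by lra.
  have -> : b2 = b3 * (x ^+ 2 + y ^+ 2) + (b4 - b1) * x by lra.
  ring.
rewrite det_a det_b in fricke; have := sqr_ge0 L; nra.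
Qed.

Lemma conj_pm_norm_tr (G : M2 -> Prop) (x y : M2) : fuchsian_group G ->
  conj_pm G x y -> `|\tr x| = `|\tr y|.
Proof.
move=> HG [g [Gg conj_g]].
have ug : g \is a GRing.unit by rewrite unitmxE (fg_det HG Gg) unitr1.
case: conj_g => [<- | conj_g]; first by rewrite mxtrace_conj.
by rewrite -[y]opprK -conj_g raddfN /= normrN mxtrace_conj.
Qed.

Lemma unor_conj_norm_tr (G : M2 -> Prop) (x c : M2) : fuchsian_group G -> G c ->
  unor_conj G x c -> `|\tr x| = `|\tr c|.
Proof.
move=> HG Gc [|/(conj_pm_norm_tr HG)->]; first exact: conj_pm_norm_tr.
by rewrite mxtrace_inv_det1 // (fg_det HG Gc).
Qed.

Lemma at_most_two_unor_conj_pow_mul (G : M2 -> Prop) (a b c : M2) (z : R * R) :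
  fuchsian_group G -> G c -> \det a = 1 -> \det b = 1 -> hyperbolic a ->
  fix_circle a z = 0 -> fix_circle b z = 0 ->
  at_most_two_pos (fun m => unor_conj G (a ^+ m * b) c).
Proof.
move=> HG Gc det_a det_b hyp_a fix_a fix_b m1 m2 m3 _ lt12 lt23 [c1 [c2 c3]].
pose u m := \tr (a ^+ m * b).
have u_rec m : u m.+2 = \tr a * u m.+1 - u m by apply: mxtrace_pow_mul_rec.
have form_lt0 : rec_form (\tr a) u 0 < 0.
  have tr_a2 : 4 < (\tr a) ^+ 2.
    by move: hyp_a; rewrite /hyperbolic -real_normK ?num_real //; nra.
  rewrite /rec_form /u expr0 expr1 mul1r.
  by have := trace_form_le det_a det_b fix_a fix_b; lra.
apply: (norm_rec_three_eq hyp_a u_rec form_lt0 (m1 := m1) (m2 := m2) (m3 := m3)).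
all: by rewrite ?lt12 // /u !(unor_conj_norm_tr HG Gc).
Qed.

Theorem lemma3p7 (G : M2 -> Prop) (HG : fuchsian_group G)
  (a b c : M2) (Ga : G a) (Gb : G b) (Gc : G c)
  (ha : hyperbolic a) (hb : hyperbolic b) (hab : axes_cross a b) :
  at_most_two_pos (fun m => unor_conj G (a ^+ m * b) c) /\
  at_most_two_pos (fun m => unor_conj G (a ^+ m * b^-1) c).
Proof.
have det_a := fg_det HG Ga; have det_b := fg_det HG Gb.
have [[z [axis_a axis_b]] _] := hab.
have fix_a := axis_fix_circle det_a axis_a.
have fix_b := axis_fix_circle det_b axis_b.
split; first exact: at_most_two_unor_conj_pow_mul HG Gc det_a det_b ha fix_a fix_b.
apply: at_most_two_unor_conj_pow_mul HG Gc det_a _ ha fix_a _.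
- by rewrite det_inv det_b invr1.
- by rewrite fix_circleV // fix_b oppr0.
Qed.
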